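(* Let $G$ be a connected undirected graph with positive edge weights, Laplacian $\mathbf{L}$ and degree matrix $\mathbf{D}$, such that the second smallest eigenvalue of its normalised Laplacian $\mathbf{D}^{-1/2}\mathbf{L}\mathbf{D}^{-1/2}$ is $\nu_2$. Let $C\subseteq V$ be a set of vertices with $F=V\setminus C$ nonempty and $|C|\ge 2$, let $\mathbf{S}=\mathbf{Sc}(\mathbf{L},C)$ be the Schur complement of $\mathbf{L}$ onto $C$, and let $\mathbf{D_C}$ be the restriction of $\mathbf{D}$ to $C$ (the original degrees). Then $\lambda_2(\mathbf{D_C}^{-1/2}\mathbf{S}\mathbf{D_C}^{-1/2})\ge\nu_2$.
   Context: Writing $\mathbf{L}=\begin{pmatrix}\mathbf{F}&\mathbf{B}\\ \mathbf{B}^\top&\mathbf{C}\end{pmatrix}$ with blocks indexed by $F$ and $C$, the Schur complement is $\mathbf{Sc}(\mathbf{L},C)=\mathbf{C}-\mathbf{B}^\top\mathbf{F}^{-1}\mathbf{B}$. $\lambda_2(\cdot)$ denotes the second smallest eigenvalue of a symmetric matrix. *)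

From HB Require Import structures.
From mathcomp Require Import all_boot all_order all_algebra.
From mathcomp Require Import reals.
Set Implicit Arguments. Unset Strict Implicit. Unset Printing Implicit Defensive.
Import Order.TTheory GRing.Theory Num.Theory.
Local Open Scope ring_scope.

Section Defs.
Variable R : realType.

(* An undirected weighted graph on vertex set 'I_n given by its weight matrix:
   symmetric, nonnegative, no self-loops; {i,j} is an edge iff 0 < w i j
   (so every edge has positive weight). *)
Definition weighted_graph n (w : 'M[R]_n) : Prop :=
  [/\ forall i j, w i j = w j i, forall i j, 0 <= w i j & forall i, w i i = 0].

Definition wconnected n (w : 'M[R]_n) : Prop :=
  forall i j : 'I_n, connect [rel a b | 0 < w a b] i j.

Definition deg n (w : 'M[R]_n) (i : 'I_n) : R := \sum_j w i j.

Definition degmx n (w : 'M[R]_n) : 'M[R]_n := diag_mx (\row_i deg w i).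
Definition laplacian n (w : 'M[R]_n) : 'M[R]_n := degmx w - w.

Definition invsqrt_deg n (w : 'M[R]_n) : 'M[R]_n :=
  diag_mx (\row_i (Num.sqrt (deg w i))^-1).

Definition normalized_laplacian n (w : 'M[R]_n) : 'M[R]_n :=
  invsqrt_deg w *m laplacian w *m invsqrt_deg w.

Definition block_on n (A B : {set 'I_n}) (M : 'M[R]_n) : 'M[R]_(#|A|, #|B|) :=
  \matrix_(i, j) M (enum_val i) (enum_val j).

Definition schur n (M : 'M[R]_n) (C : {set 'I_n}) : 'M[R]_#|C| :=
  block_on C C M
  - block_on C (~: C) M *m invmx (block_on (~: C) (~: C) M) *m block_on (~: C) C M.

Definition invsqrt_deg_on n (w : 'M[R]_n) (C : {set 'I_n}) : 'M[R]_#|C| :=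
  diag_mx (\row_i (Num.sqrt (deg w (enum_val i)))^-1).

(* s is the list of eigenvalues of M, counted with multiplicity, in
   nondecreasing order: the characteristic polynomial of M splits with roots s. *)
Definition is_spectrum m (M : 'M[R]_m) (s : seq R) : Prop :=
  sorted <=%R s /\ char_poly M = \prod_(x <- s) ('X - x%:P).

End Defs.

(* Write N for the normalised Laplacian and B = D_C^-1/2 S D_C^-1/2.  With the
   harmonic extension Z onto C (see harmonic_ext), W = D_C^-1/2 Z D^1/2 satisfies
   W N W^T = B and W W^T = I + H D_FF H^T >= I; connectivity makes L_FF invertible
   and all degrees positive.  Working over R[i] to use the spectral theorem, N has
   a bottom eigenvector u with nu_2 |x|^2 <= <x N, x> for every x orthogonal to u,
   while B has an orthonormal family of at least two eigenvectors with eigenvalues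
   <= lambda_2.  Some nonzero combination y of them has yW orthogonal to u, hence
     nu_2 |yW|^2 <= <yW N, yW> = <y B, y> <= lambda_2 |y|^2 <= lambda_2 |yW|^2,
   where lambda_2 >= 0 because N, hence B, is positive semidefinite. *)

From HB Require Import structures.
From mathcomp Require Import all_boot all_order all_algebra.
From mathcomp Require Import reals complex ring.
Import Order.TTheory GRing.Theory Num.Theory.
Set Implicit Arguments. Unset Strict Implicit. Unset Printing Implicit Defensive.
Local Open Scope ring_scope.
Local Open Scope sesquilinear_scope.

Local Notation "''[' u , v ]" := (dotmx u v) : ring_scope.
Local Notation "''[' u ]" := (dotmx u u) : ring_scope.
Local Notation "A ^c" := (map_mx (real_complex _) A) : ring_scope.
Local Open Scope complex_scope.

Lemma count_enum (T : finType) (P : pred T) : count P (enum T) = #|P|.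
Proof.
rewrite cardE /enum_mem size_filter count_filter.
by apply: eq_count => x; rewrite !inE andbT.
Qed.

Lemma exists_nonzero_left_kernel (F : fieldType) m p (X : 'M[F]_(m, p)) :
  (p < m)%N -> exists2 v : 'rV_m, v != 0 & v *m X = 0.
Proof.
move=> lt_pm; exists (nz_row (kermx X)); last exact/sub_kermxP/nz_row_sub.
rewrite nz_row_eq0 -mxrank_eq0 mxrank_ker subn_eq0 -ltnNge.
exact: leq_ltn_trans (rank_leq_col X) lt_pm.
Qed.

Lemma ler_rayleigh_chain (C : numDomainType) (a b p q r : C) :
  0 < p -> p <= q -> 0 <= r -> a * q <= r -> r <= b * p -> a <= b.
Proof.
move=> p_gt0 le_pq r_ge0 le_aqr le_rbp.
have b_ge0 : 0 <= b by rewrite -(pmulr_lge0 _ p_gt0) (le_trans r_ge0).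
rewrite -(ler_pM2r (lt_le_trans p_gt0 le_pq)) (le_trans le_aqr) //.
by rewrite (le_trans le_rbp) // ler_wpM2l.
Qed.

Section SortedList.
Variables (d : Order.disp_t) (T : porderType d) (x0 : T).
Local Open Scope order_scope.

Lemma sorted_count_lt_nth1 (s : seq T) :
  sorted <=%O s -> (count (< nth x0 s 1) s <= 1)%N.
Proof.
case: s => [|a [|b t]] //=; first by case: (a < x0).
case/andP=> _ path_bt; rewrite ltxx add0n.
have -> : count (< b) t = 0%N.
  apply/eqP; rewrite -leqn0 leqNgt -has_count; apply/hasPn => x x_t.
  by rewrite /= le_gtF // (allP (order_path_min le_trans path_bt)).
by case: (a < b).
Qed.

Lemma sorted_count_le_nth1 (s : seq T) :
  sorted <=%O s -> (1 < size s)%N -> (1 < count (<= nth x0 s 1) s)%N.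
Proof. by case: s => [|a [|b t]] //= /andP[-> _]; rewrite lexx. Qed.

End SortedList.

Section DotProduct.
Variable C : numClosedFieldType.

Lemma dotmx_mulmxl m n (u : 'rV[C]_m) (v : 'rV[C]_n) (A : 'M[C]_(m, n)) :
  '[u *m A, v] = '[u, v *m A^t*].
Proof. by rewrite !dotmxE trmx_mul map_mxM trmxCK mulmxA. Qed.

Lemma dotmx_mulmxr m n (u : 'rV[C]_n) (v : 'rV[C]_m) (A : 'M[C]_(m, n)) :
  '[u, v *m A] = '[u *m A^t*, v].
Proof. by rewrite dotmx_mulmxl trmxCK. Qed.

Lemma dotmx_unitary m n (u : 'rV[C]_m) (V : 'M[C]_(m, n)) :
  V \is unitarymx -> '[u *m V] = '[u].
Proof. by move=> Vu; rewrite dotmx_mulmxl mulmxtVK. Qed.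

Lemma dotmx_adj_congr m (P A : 'M[C]_m) (x : 'rV_m) :
  '[x *m (P^t* *m A *m P), x] = '[x *m P^t* *m A, x *m P^t*].
Proof. by rewrite !mulmxA dotmx_mulmxl. Qed.

Lemma dotmx_row m n (x : 'rV[C]_n) (P : 'M[C]_(m, n)) k :
  '[x, row k P] = (x *m P^t*) 0 k.
Proof. by rewrite dotmxE !mxE; apply: eq_bigr => j _; rewrite !mxE. Qed.

Lemma dotmx_sumE m (z : 'rV[C]_m) : '[z] = \sum_i `|z 0 i| ^+ 2.
Proof. by rewrite dotmxE mxE; apply: eq_bigr => i _; rewrite !mxE normCK. Qed.

Lemma dotmx_diagE m (z e : 'rV[C]_m) :
  '[z *m diag_mx e, z] = \sum_i e 0 i * `|z 0 i| ^+ 2.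
Proof.
rewrite dotmxE mxE; apply: eq_bigr => i _.
by rewrite mul_mx_diag !mxE normCK mulrAC mulrC.
Qed.

Lemma dotmx_diag_le m (z e : 'rV[C]_m) b :
  (forall i, z 0 i != 0 -> e 0 i <= b) -> '[z *m diag_mx e, z] <= b * '[z].
Proof.
move=> le_eb; rewrite dotmx_diagE dotmx_sumE mulr_sumr; apply: ler_sum => i _.
have [-> | /le_eb le_eib] := eqVneq (z 0 i) 0; first by rewrite normr0 expr0n !mulr0.
by rewrite ler_wpM2r ?exprn_ge0.
Qed.

Lemma dotmx_diag_ge m (z e : 'rV[C]_m) b :
  (forall i, z 0 i != 0 -> b <= e 0 i) -> b * '[z] <= '[z *m diag_mx e, z].
Proof.
move=> le_be; rewrite dotmx_diagE dotmx_sumE mulr_sumr; apply: ler_sum => i _.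
have [-> | /le_be le_bei] := eqVneq (z 0 i) 0; first by rewrite normr0 expr0n !mulr0.
by rewrite ler_wpM2r ?exprn_ge0.
Qed.

End DotProduct.

Lemma trmx_diag_congr (F : comPzRingType) m (d : 'rV[F]_m) (A : 'M[F]_m) :
  A^T = A -> (diag_mx d *m A *m diag_mx d)^T = diag_mx d *m A *m diag_mx d.
Proof. by move=> A_sym; rewrite !trmx_mul tr_diag_mx A_sym mulmxA. Qed.

Lemma char_poly_similar (F : comUnitRingType) m (P A : 'M[F]_m) :
  P \in unitmx -> char_poly (invmx P *m A *m P) = char_poly A.
Proof.
move=> Pu; rewrite /char_poly /char_poly_mx.
set Q := map_mx polyC P; set Qi := map_mx polyC (invmx P).
have QiQ : Qi *m Q = 1%:M by rewrite -map_mxM mulVmx // map_mx1.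
have -> : 'X%:M - map_mx polyC (invmx P *m A *m P) =
          Qi *m ('X%:M - map_mx polyC A) *m Q.
  have QiXQ : Qi *m 'X%:M *m Q = 'X%:M by rewrite scalar_mxC -mulmxA QiQ mulmx1.
  by rewrite mulmxBr mulmxBl QiXQ -!map_mxM.
by rewrite !det_mulmx mulrAC -det_mulmx QiQ det1 mul1r.
Qed.

Section RealSymmetric.
Variable R : realType.

Lemma conj_map_real m p (A : 'M[R]_(m, p)) : A^c^t* = (A^T)^c.
Proof. by apply/matrixP => i j; rewrite !mxE conj_Creal // complex_real. Qed.

Lemma real_symmetric_spectral m (M : 'M[R]_m) s : M^T = M -> is_spectrum M s ->
  exists P : 'M[R[i]]_m, exists e : 'rV[R]_m,
    [/\ P \is unitarymx, M^c = P^t* *m diag_mx e^c *m P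
      & perm_eq s [seq e 0 i | i <- enum 'I_m]].
Proof.
move=> M_sym [_ charM].
have M_herm : M^c \is hermsymmx.
  apply: realsym_hermsym; last by apply/mxOverP => i j; rewrite mxE complex_real.
  by apply/is_hermitianmxP/matrixP => i j; rewrite expr0 scale1r !mxE -{1}M_sym mxE.
have /hermitian_normalmx/orthomx_spectralP M_dec := M_herm.
have /mxOverP dd_real := hermitian_spectral_diag_real M_herm.
set P := spectralmx M^c in M_dec; set dd := spectral_diag M^c in M_dec dd_real.
have Pu : P \is unitarymx by apply: spectral_unitarymx.
exists P, (\row_i complex.Re (dd 0 i)).
have -> : (\row_i complex.Re (dd 0 i))^c = dd.
  by apply/rowP => i; rewrite !mxE RRe_real.
rewrite -invmx_unitary //; split => //.
have := map_char_poly (real_complex R) M.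
rewrite M_dec char_poly_similar ?unitarymx_unit //.
rewrite [char_poly (diag_mx _)]char_poly_trig ?diag_mx_is_trig // charM => charE.
apply: prod_XsubC_eq; apply: (map_poly_inj (real_complex R)).
rewrite charE big_map big_enum /= rmorph_prod; apply: eq_bigr => i _.
by rewrite !mxE eqxx mulr1n rmorphB /= map_polyX map_polyC /= RRe_real.
Qed.

Lemma second_eigenvalue_le_rayleigh m (M : 'M[R]_m) s :
  M^T = M -> is_spectrum M s ->
  exists u : 'rV[R[i]]_m, forall x, '[x, u] = 0 -> (s`_1)%:C * '[x] <= '[x *m M^c, x].
Proof.
move=> M_sym specM; have [P [e [Pu M_dec perm_s]]] := real_symmetric_spectral M_sym specM.
have Ptu : P^t* \is unitarymx by rewrite trmxC_unitary.
have below_le1 : (#|[pred i | (e 0 i < s`_1)%R]| <= 1)%N.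
  rewrite -count_enum -(count_map (fun i => e 0 i) (< s`_1)) -(permP perm_s).
  exact: sorted_count_lt_nth1 specM.1.
suff [u u_below] : exists u : 'rV_m, forall x, '[x, u] = 0 ->
    forall i, (x *m P^t*) 0 i != 0 -> s`_1 <= e 0 i.
  exists u => x xu; rewrite M_dec dotmx_adj_congr -(dotmx_unitary x Ptu).
  by apply: dotmx_diag_ge => i /(u_below x xu) le_s1e; rewrite mxE lecR.
case: (pickP [pred i | e 0 i < s`_1]) => [k lt_k | below0]; last first.
  by exists 0 => x _ i _; rewrite leNgt (negbT (below0 i)).
exists (row k P) => x; rewrite dotmx_row => xk i; rewrite leNgt; apply: contra => lt_i.
have /eqP -> : i \in pred1 k by rewrite -(card_le1P below_le1 k lt_k) inE.
by rewrite xk.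
Qed.

Lemma rayleigh_le_second_eigenvalue m (M : 'M[R]_m) s :
  M^T = M -> is_spectrum M s -> (1 < m)%N ->
  exists p (V : 'M[R[i]]_(p, m)), [/\ (1 < p)%N, V \is unitarymx &
    forall c, '[c *m V *m M^c, c *m V] <= (s`_1)%:C * '[c]].
Proof.
move=> M_sym specM m_gt1.
have [P [e [Pu M_dec perm_s]]] := real_symmetric_spectral M_sym specM.
set J := [set i | (e 0 i <= s`_1)%R].
have J_gt1 : (1 < #|J|)%N.
  rewrite cardsE -count_enum -(count_map (fun i => e 0 i) (<= s`_1)) -(permP perm_s).
  by apply: sorted_count_le_nth1 specM.1 _; rewrite (perm_size perm_s) size_map size_enum_ord.
pose V := rowsub (fun k : 'I_#|J| => enum_val k) P.
have Vu : V \is unitarymx.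
  apply/row_unitarymxP => k l; rewrite !row_rowsub (row_unitarymxP Pu).
  by rewrite (inj_eq enum_val_inj).
exists #|J|, V; split=> // c.
rewrite M_dec dotmx_adj_congr -(dotmx_unitary c Vu).
rewrite -(dotmx_unitary (c *m V) (_ : P^t* \is unitarymx)) ?trmxC_unitary //.
apply: dotmx_diag_le => i nz_i; rewrite mxE lecR; apply: contraTT nz_i => /negbTE Ji.
rewrite negbK -mulmxA mul_rowsub_mx (unitarymxP Pu) !mxE; apply/eqP/big1 => k _.
rewrite !mxE; case: eqP => [eq_ki | _]; last by rewrite mulr0.
by move: (enum_valP k); rewrite eq_ki inE Ji.
Qed.

Lemma dotmx_map_congr m p (y : 'rV[R[i]]_m) (W : 'M[R]_(m, p)) (A : 'M[R]_p) :
  '[y *m W^c *m A^c, y *m W^c] = '[y *m (W *m A *m W^T)^c, y].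
Proof. by rewrite dotmx_mulmxr conj_map_real -!mulmxA -!map_mxM mulmxA. Qed.

Lemma dotmx_map_gram m p (y : 'rV[R[i]]_m) (W : 'M[R]_(m, p)) :
  '[y *m W^c] = '[y *m (W *m W^T)^c, y].
Proof. by rewrite dotmx_mulmxr conj_map_real -mulmxA -map_mxM. Qed.

Lemma dotmx_map_real m (x : 'rV[R]_m) (A : 'M[R]_m) :
  '[x^c *m A^c, x^c] = ((x *m A *m x^T) 0 0)%:C.
Proof. by rewrite dotmxE conj_map_real -!map_mxM mxE. Qed.

End RealSymmetric.

Section SelectionMatrix.
Variables (R : realType) (n : nat).
Implicit Types (A B : {set 'I_n}) (M : 'M[R]_n).

Definition selmx A : 'M[R]_(#|A|, n) := rowsub (fun i : 'I_#|A| => enum_val i) 1%:M.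

Lemma block_onE A B M : block_on A B M = selmx A *m M *m (selmx B)^T.
Proof.
rewrite /selmx mul_rowsub_mx mul1mx; apply/matrixP => i j.
rewrite !mxE (bigD1 (enum_val j)) //=.
rewrite !mxE eqxx mulr1 big1 ?addr0 // => k /negbTE neq_kj.
by rewrite !mxE eq_sym neq_kj mulr0.
Qed.

Lemma mul_selmx_tr A : selmx A *m (selmx A)^T = 1%:M.
Proof.
rewrite -{1}[selmx A]mulmx1 -block_onE.
by apply/matrixP => i j; rewrite !mxE (inj_eq enum_val_inj).
Qed.

Lemma tr_block_on A B M : (block_on A B M)^T = block_on B A M^T.
Proof. by apply/matrixP => i j; rewrite !mxE. Qed.

Lemma block_on_diag A (d : 'rV[R]_n) :
  block_on A A (diag_mx d) = diag_mx (\row_i d 0 (enum_val i)).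
Proof. by apply/matrixP => i j; rewrite !mxE (inj_eq enum_val_inj); case: eqP => // ->. Qed.

Lemma block_on_diag_disjoint A B (d : 'rV[R]_n) :
  [disjoint A & B] -> block_on A B (diag_mx d) = 0.
Proof.
move=> AB; apply/matrixP => i j; rewrite !mxE; case: eqP => [eq_ij | _]; last exact: mulr0n.
by move: (disjointFr AB (enum_valP i)); rewrite eq_ij enum_valP.
Qed.

End SelectionMatrix.
Arguments selmx {R n} A.

Section HarmonicExtension.
Variables (R : realType) (n : nat) (M : 'M[R]_n) (C : {set 'I_n}).
Local Notation F := (~: C).

Definition schur_gain : 'M[R]_(#|C|, #|F|) := block_on C F M *m invmx (block_on F F M).

(* Transposed, this sends x_C to the M-harmonic extension (x_C, -M_FF^-1 M_FC x_C)
   when M is symmetric. *)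
Definition harmonic_ext : 'M[R]_(#|C|, n) := selmx C - schur_gain *m selmx F.

Lemma schur_sym : M^T = M -> (schur M C)^T = schur M C.
Proof.
move=> M_sym; rewrite /schur linearB /= !trmx_mul !tr_block_on trmx_inv tr_block_on M_sym.
by rewrite mulmxA.
Qed.

Lemma harmonic_ext_congr (K : 'M[R]_n) :
  harmonic_ext *m K *m harmonic_ext^T =
  block_on C C K - schur_gain *m block_on F C K - block_on C F K *m schur_gain^T
  + schur_gain *m block_on F F K *m schur_gain^T.
Proof.
rewrite /harmonic_ext !block_onE linearB /= trmx_mul.
rewrite mulmxBl mulmxBr !mulmxBl !mulmxA opprB addrA.
by rewrite addrAC.
Qed.

Lemma schur_harmonic_ext : block_on F F M \in unitmx ->
  harmonic_ext *m M *m harmonic_ext^T = schur M C.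
Proof.
by move=> MFF_unit; rewrite harmonic_ext_congr /schur_gain mulmxKV // subrK.
Qed.

Lemma harmonic_ext_diag (d : 'rV[R]_n) :
  harmonic_ext *m diag_mx d *m harmonic_ext^T =
  block_on C C (diag_mx d) + schur_gain *m block_on F F (diag_mx d) *m schur_gain^T.
Proof.
have CF : [disjoint C & F] by rewrite disjoints_subset setCK.
have FC : [disjoint F & C] by rewrite disjoint_sym.
rewrite harmonic_ext_congr (block_on_diag_disjoint _ CF) (block_on_diag_disjoint _ FC).
by rewrite mulmx0 mul0mx !subr0.
Qed.

End HarmonicExtension.

Section DegreeNormalization.
Variables (R : realType) (n : nat) (w : 'M[R]_n) (C : {set 'I_n}).
Hypothesis deg_pos : forall i, 0 < deg w i.

Definition sqrt_deg : 'M[R]_n := diag_mx (\row_i Num.sqrt (deg w i)).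

Lemma sqrt_degK : sqrt_deg *m invsqrt_deg w = 1%:M.
Proof.
rewrite mulmx_diag; apply/matrixP => i j; rewrite !mxE.
by rewrite mulfV // gt_eqF // sqrtr_gt0.
Qed.

Lemma invsqrt_degK : invsqrt_deg w *m sqrt_deg = 1%:M.
Proof.
rewrite mulmx_diag; apply/matrixP => i j; rewrite !mxE.
by rewrite mulVf // gt_eqF // sqrtr_gt0.
Qed.

Lemma sqrt_deg_gram : sqrt_deg *m sqrt_deg^T = degmx w.
Proof.
rewrite tr_diag_mx mulmx_diag; apply/matrixP => i j; rewrite !mxE.
by rewrite -expr2 sqr_sqrtr // ltW.
Qed.

Lemma invsqrt_deg_on_deg :
  invsqrt_deg_on w C *m block_on C C (degmx w) *m invsqrt_deg_on w C = 1%:M.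
Proof.
rewrite block_on_diag !mulmx_diag; apply/matrixP => i j; rewrite !mxE.
by rewrite mulrAC -expr2 exprVn sqr_sqrtr ?ltW // mulVf // gt_eqF.
Qed.

Definition schur_embedding : 'M[R]_(#|C|, n) :=
  invsqrt_deg_on w C *m harmonic_ext (laplacian w) C *m sqrt_deg.

Lemma schur_embedding_congr : block_on (~: C) (~: C) (laplacian w) \in unitmx ->
  schur_embedding *m normalized_laplacian w *m schur_embedding^T =
  invsqrt_deg_on w C *m schur (laplacian w) C *m invsqrt_deg_on w C.
Proof.
move=> LFF_unit; rewrite -schur_harmonic_ext // /schur_embedding /normalized_laplacian.
rewrite !trmx_mul /sqrt_deg /invsqrt_deg_on !tr_diag_mx -/sqrt_deg !mulmxA.
rewrite -[_ *m sqrt_deg *m invsqrt_deg w]mulmxA sqrt_degK mulmx1.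
by rewrite -[_ *m invsqrt_deg w *m sqrt_deg]mulmxA invsqrt_degK mulmx1.
Qed.

Lemma schur_embedding_gram (H := invsqrt_deg_on w C *m schur_gain (laplacian w) C) :
  schur_embedding *m schur_embedding^T =
  1%:M + H *m block_on (~: C) (~: C) (degmx w) *m H^T.
Proof.
have -> : schur_embedding *m schur_embedding^T = invsqrt_deg_on w C *m
    (harmonic_ext (laplacian w) C *m degmx w *m (harmonic_ext (laplacian w) C)^T) *m
    invsqrt_deg_on w C.
  by rewrite /schur_embedding !trmx_mul -sqrt_deg_gram /invsqrt_deg_on !tr_diag_mx !mulmxA.
rewrite /degmx (harmonic_ext_diag (laplacian w) C) mulmxDr mulmxDl invsqrt_deg_on_deg.
rewrite {}/H; move: (schur_gain _ _) => G.
by rewrite trmx_mul {3}/invsqrt_deg_on tr_diag_mx !mulmxA.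
Qed.

End DegreeNormalization.

Section Laplacian.
Variables (R : realType) (n : nat) (w : 'M[R]_n).
Hypotheses (w_sym : forall i j, w i j = w j i) (w_ge0 : forall i j, 0 <= w i j).

Lemma laplacian_sym : (laplacian w)^T = laplacian w.
Proof.
rewrite /laplacian linearB /= /degmx tr_diag_mx; congr (_ - _).
by apply/matrixP => i j; rewrite mxE w_sym.
Qed.

Lemma dotmx_laplacian (z : 'rV[R[i]]_n) :
  '[z *m (laplacian w)^c, z] *+ 2 =
  \sum_u \sum_v (w u v)%:C * `|z 0 u - z 0 v| ^+ 2.
Proof.
have half : '[z *m (laplacian w)^c, z] =
    \sum_u \sum_v (w u v)%:C * (z 0 u * (z 0 u - z 0 v)^*).
  rewrite /laplacian map_mxB mulmxBr linearBl /= /degmx map_diag_mx dotmx_diagE.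
  have -> : '[z *m w^c, z] = \sum_u \sum_v (w u v)%:C * (z 0 u * (z 0 v)^*).
    rewrite dotmxE mxE exchange_big; apply: eq_bigr => v _; rewrite !mxE mulr_suml.
    by apply: eq_bigr => u _; rewrite !mxE mulrCA mulrA.
  rewrite -sumrB; apply: eq_bigr => u _; rewrite !mxE /deg rmorph_sum mulr_suml -sumrB.
  by apply: eq_bigr => v _; rewrite normCK rmorphB /=; ring.
have swap : '[z *m (laplacian w)^c, z] =
    \sum_u \sum_v (w u v)%:C * (z 0 v * (z 0 v - z 0 u)^*).
  by rewrite half exchange_big; apply: eq_bigr => u _; apply: eq_bigr => v _; rewrite w_sym.
rewrite mulr2n {1}half swap -big_split; apply: eq_bigr => u _ /=.
rewrite -big_split; apply: eq_bigr => v _ /=.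
by rewrite normCK !rmorphB /=; ring.
Qed.

Lemma dotmx_laplacian_ge0 z : 0 <= '[z *m (laplacian w)^c, z].
Proof.
rewrite -(pmulrn_lge0 _ (isT : (0 < 2)%N)) dotmx_laplacian.
apply: sumr_ge0 => u _; apply: sumr_ge0 => v _.
by rewrite mulr_ge0 ?exprn_ge0 ?normr_ge0 ?ler0c ?w_ge0.
Qed.

Lemma dotmx_normalized_laplacian_ge0 z : 0 <= '[z *m (normalized_laplacian w)^c, z].
Proof.
have Dsym : (invsqrt_deg w)^T = invsqrt_deg w by rewrite tr_diag_mx.
by rewrite /normalized_laplacian -{2}Dsym -dotmx_map_congr dotmx_laplacian_ge0.
Qed.

Lemma dotmx_laplacian_eq0 z : '[z *m (laplacian w)^c, z] = 0 ->
  forall u v, 0 < w u v -> z 0 u = z 0 v.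
Proof.
move=> zLz0 u v w_uv.
have term_ge0 u' v' : 0 <= (w u' v')%:C * `|z 0 u' - z 0 v'| ^+ 2.
  by rewrite mulr_ge0 ?exprn_ge0 ?normr_ge0 ?ler0c ?w_ge0.
have row_ge0 u' : 0 <= \sum_v' (w u' v')%:C * `|z 0 u' - z 0 v'| ^+ 2.
  exact: sumr_ge0.
have sum0 : \sum_u' \sum_v' (w u' v')%:C * `|z 0 u' - z 0 v'| ^+ 2 = 0.
  by rewrite -dotmx_laplacian zLz0 mul0rn.
have row0 := psumr_eq0P (fun u' _ => row_ge0 u') sum0 (i := u) isT.
have /eqP := psumr_eq0P (fun v' _ => term_ge0 u v') row0 (i := v) isT.
by rewrite mulf_eq0 (negbTE (lt0r_neq0 _)) ?ltcR // sqrf_eq0 normr_eq0 subr_eq0 => /eqP.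
Qed.

Hypothesis w_conn : wconnected w.

Lemma deg_gt0 : (1 < n)%N -> forall i, 0 < deg w i.
Proof.
move=> n_gt1 i; have [j neq_ji] : exists j : 'I_n, j != i.
  have /card_gt1P[a [b [_ _ neq_ab]]] : (1 < #|[set: 'I_n]|)%N by rewrite cardsT card_ord.
  by have [<- | ] := eqVneq a i; [exists b; rewrite eq_sym | exists a].
have /connectP[[|k p] /= i_path j_last] := w_conn i j; first by rewrite j_last eqxx in neq_ji.
case/andP: i_path => w_ik _; rewrite /deg (bigD1 k) //= ltr_pwDl //.
by apply: sumr_ge0 => l _.
Qed.

Lemma dotmx_laplacian_eq0_const z : '[z *m (laplacian w)^c, z] = 0 ->
  forall u v, z 0 u = z 0 v.
Proof.
move=> zLz0 u v; have /connectP[p] := w_conn u v.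
elim: p u => [|k p IHp] u /=; first by move=> _ ->.
by case/andP=> w_uk k_path v_last; rewrite (dotmx_laplacian_eq0 zLz0 w_uk) IHp.
Qed.

Lemma laplacian_block_unit (C : {set 'I_n}) : C != set0 ->
  block_on (~: C) (~: C) (laplacian w) \in unitmx.
Proof.
case/set0Pn=> c c_C; rewrite unitmxE unitfE; apply/det0P => -[v nz_v vL].
pose x := v *m selmx (~: C).
have xLx0 : '[x^c *m (laplacian w)^c, x^c] = 0.
  rewrite dotmx_map_real /x trmx_mul !mulmxA -(mulmxA v) -(mulmxA v) -block_onE vL.
  by rewrite mul0mx mxE.
have x_c : x 0 c = 0.
  rewrite !mxE big1 // => j _; rewrite !mxE.
  by case: eqP => [eq_jc | _]; [move: (enum_valP j); rewrite eq_jc inE c_C | rewrite mulr0].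
have v_x : v = x *m (selmx (~: C))^T by rewrite /x -mulmxA mul_selmx_tr mulmx1.
clearbody x; suff x0 : x = 0 by move: nz_v; rewrite v_x x0 mul0mx eqxx.
apply/rowP => u; rewrite mxE; apply: (@complexI R).
by have := dotmx_laplacian_eq0_const xLx0 u c; rewrite !mxE x_c.
Qed.

End Laplacian.

Lemma dotmx_le_mul_schur_embedding (R : realType) n (w : 'M[R]_n) (C : {set 'I_n})
    (y : 'rV[R[i]]_#|C|) :
  (forall i, 0 < deg w i) -> '[y] <= '[y *m (schur_embedding w C)^c].
Proof.
move=> deg_gt0; rewrite dotmx_map_gram schur_embedding_gram // map_mxD map_mx1.
rewrite mulmxDr mulmx1 linearDl /= lerDl -dotmx_map_congr /degmx block_on_diag map_diag_mx.
apply: le_trans (dotmx_diag_ge (b := 0) _) => [|i _]; first by rewrite mul0r.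
by rewrite !mxE ler0c ltW.
Qed.


Unset Implicit Arguments.
Theorem lemma4p3 (R : realType) (n : nat) (w : 'M[R]_n) (C : {set 'I_n})
    (nu lam : seq R) :
  weighted_graph w -> wconnected w ->
  ~: C != set0 -> (2 <= #|C|)%N ->
  is_spectrum (normalized_laplacian w) nu ->
  is_spectrum (invsqrt_deg_on w C *m schur (laplacian w) C *m invsqrt_deg_on w C) lam ->
  nu`_1 <= lam`_1.
Proof.
move=> [w_sym w_ge0 _] w_conn _ C_gt1 spec_nu spec_lam.
have n_gt1 : (1 < n)%N by rewrite -[n]card_ord (leq_trans C_gt1) ?max_card.
have deg_pos := deg_gt0 w_ge0 w_conn n_gt1.
have LFF_unit : block_on (~: C) (~: C) (laplacian w) \in unitmx.
  by apply: (laplacian_block_unit w_sym w_ge0 w_conn); rewrite -card_gt0 ltnW.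
have [u u_lower] := second_eigenvalue_le_rayleigh
  (trmx_diag_congr _ (laplacian_sym w_sym)) spec_nu.
have [p [V [p_gt1 V_unitary V_upper]]] := rayleigh_le_second_eigenvalue
  (trmx_diag_congr _ (schur_sym _ (laplacian_sym w_sym))) spec_lam C_gt1.
pose W := (schur_embedding w C)^c.
have [c nz_c cVWu] := exists_nonzero_left_kernel (V *m W *m u^t*) p_gt1.
rewrite -lecR; apply: (@ler_rayleigh_chain _ _ _ '[c] '[c *m V *m W]
  '[c *m V *m W *m (normalized_laplacian w)^c, c *m V *m W]).
- by rewrite dnorm_gt0.
- by rewrite -(dotmx_unitary c V_unitary) dotmx_le_mul_schur_embedding.
- exact: dotmx_normalized_laplacian_ge0.
- by apply: u_lower; rewrite dotmxE -!mulmxA (mulmxA V) cVWu mxE.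
- by rewrite dotmx_map_congr schur_embedding_congr //; apply: V_upper.
Qed.
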